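(* Let $n\ge1$ be an integer. Suppose there exists $p>1$ such that for every $s>\frac{n}{2(n+1)}$ there is $C_s$ with $$\Big\|\sup_{0<t<1}|e^{it\Delta}f(x)|\Big\|_{L^p(B(0,1))}\le C_s\|f\|_{H^s(\mathbb{R}^n)}\quad\text{for all }f\in H^s(\mathbb{R}^n).$$ Then $p\le\frac{2(n+1)}{n}$.
   Context: For $f$ on $\mathbb{R}^n$, $e^{it\Delta}f(x):=\int_{\mathbb{R}^n}e^{i(x\cdot\xi+t|\xi|^2)}\hat f(\xi)\,d\xi$; $H^s(\mathbb{R}^n)$ is the $L^2$-based Sobolev space; $B(0,1)$ is the unit ball in $\mathbb{R}^n$. *)

From HB Require Import structures.
From mathcomp Require Import all_boot all_order all_algebra.
From mathcomp Require Import all_classical all_reals all_analysis.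
Set Implicit Arguments. Unset Strict Implicit. Unset Printing Implicit Defensive.
Import Order.TTheory GRing.Theory Num.Theory.
Import numFieldNormedType.Exports.
Local Open Scope classical_set_scope.
Local Open Scope ring_scope.

(* Points of R^n are n-tuples of reals ('n.-tuple R' carries the product
   (= Borel) sigma-algebra of MathComp-Analysis). *)

(* Lebesgue integral over R^n, written as the iterated integral over the n
   coordinates (Tonelli/Fubini) with respect to one-dimensional Lebesgue
   measure. *)
Fixpoint iint {R : realType} (n : nat) : (n.-tuple R -> \bar R) -> \bar R :=
  match n return (n.-tuple R -> \bar R) -> \bar R with
  | 0 => fun F => F [tuple]
  | k.+1 => fun F =>
      (\int[@lebesgue_measure R]_x iint (fun v : k.-tuple R => F (cons_tuple x v)))%E
  end.

Section Schrodinger.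
Context {R : realType} {n : nat}.

Definition dotp (x y : n.-tuple R) : R := \sum_(i < n) tnth x i * tnth y i.
Definition sqnorm (x : n.-tuple R) : R := \sum_(i < n) tnth x i ^+ 2.

Definition unit_ball : set (n.-tuple R) := [set x | sqnorm x < 1].

(* A complex-valued function on R^n is given by its real and imaginary parts
   (gr, gi); here (gr, gi) is the Fourier transform \hat f of f.
   e^{it\Delta} f (x) = \int e^{i(x.xi + t|xi|^2)} \hat f(xi) dxi,
   real and imaginary parts: *)
Definition schro_re (gr gi : n.-tuple R -> R) (t : R) (x : n.-tuple R) : \bar R :=
  iint (fun xi => (cos (dotp x xi + t * sqnorm xi) * gr xi
                   - sin (dotp x xi + t * sqnorm xi) * gi xi)%:E).
Definition schro_im (gr gi : n.-tuple R -> R) (t : R) (x : n.-tuple R) : \bar R :=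
  iint (fun xi => (sin (dotp x xi + t * sqnorm xi) * gr xi
                   + cos (dotp x xi + t * sqnorm xi) * gi xi)%:E).

Definition schro_abs (gr gi : n.-tuple R -> R) (t : R) (x : n.-tuple R) : R :=
  Num.sqrt (fine (schro_re gr gi t x) ^+ 2 + fine (schro_im gr gi t x) ^+ 2).

Definition schro_max (gr gi : n.-tuple R -> R) (x : n.-tuple R) : \bar R :=
  ereal_sup [set (schro_abs gr gi t x)%:E | t in `]0, 1[%classic].

Definition maxfun_Lp_ball (p : R) (gr gi : n.-tuple R -> R) : \bar R :=
  ((iint (fun x => if `[< unit_ball x >] then (schro_max gr gi x `^ p)%E
                   else 0%E)) `^ p^-1)%E.

Definition cabs (gr gi : n.-tuple R -> R) (xi : n.-tuple R) : R :=
  Num.sqrt (gr xi ^+ 2 + gi xi ^+ 2).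

Definition Hs_norm (s : R) (gr gi : n.-tuple R -> R) : \bar R :=
  ((iint (fun xi => ((1 + sqnorm xi) `^ s * cabs gr gi xi ^+ 2)%:E)) `^ (2^-1))%E.

End Schrodinger.

From HB Require Import structures.
From mathcomp Require Import all_boot all_order all_algebra.
From mathcomp Require Import all_classical all_reals all_analysis.
From mathcomp Require Import ring lra.
Import Order.TTheory GRing.Theory Num.Theory.
Import numFieldNormedType.Exports.
Local Open Scope classical_set_scope.
Local Open Scope ring_scope.

(* Knapp's example.  Take \hat f the indicator of the cube [0, L]^n, L >= 1.  For x in
   the cube [0, 1/(2nL)]^n and t = 1/(2nL^2), the phase x.xi + t|xi|^2 stays in [0, 1] on
   the support of \hat f, so Re e^{it\Delta} f(x) >= cos 1 * L^n there.  The left-hand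
   side of the estimate is therefore >~ L^(n - n/p), while ||f||_{H^s} <~ L^(s + n/2).
   Letting L -> oo gives n/2 - n/p <= s for every s > n/(2(n+1)), i.e. p <= 2(n+1)/n. *)

Section iterated_integral.
Context {R : realType}.
Local Open Scope ereal_scope.

(* No measurability is needed: for nonnegative functions the integral is a supremum
   over simple minorants. *)
Lemma ge0_le_integralT d (T : measurableType d) (mu : {measure set T -> \bar R})
    (f g : T -> \bar R) :
  (forall x, 0 <= f x) -> (forall x, f x <= g x) ->
  \int[mu]_x f x <= \int[mu]_x g x.
Proof.
move=> f0 fg; have g0 x : 0 <= g x by exact: le_trans (f0 x) (fg x).
rewrite !ge0_integralTE//; apply: ereal_sup_le => _ [h hf <-].
by exists h => //= x; exact: le_trans (hf x) (fg x).
Qed.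

Lemma iint_ge0 n (F : n.-tuple R -> \bar R) : (forall v, 0 <= F v) -> 0 <= iint F.
Proof.
elim: n F => [|k IH] F F0 /=; first exact: F0.
by apply: integral_ge0 => x _; exact: IH.
Qed.

Lemma le_iint n (F G : n.-tuple R -> \bar R) :
  (forall v, 0 <= F v) -> (forall v, F v <= G v) -> iint F <= iint G.
Proof.
elim: n F G => [|k IH] F G F0 FG /=; first exact: FG.
by apply: ge0_le_integralT => x; [exact: iint_ge0 | exact: IH].
Qed.

End iterated_integral.

Section cube_indicator.
Context {R : realType}.

Definition cube_indic {n} (a b : R) (v : n.-tuple R) : R :=
  \prod_(i < n) \1_(`[a, b]%classic) (tnth v i).

Lemma cube_indicE n a b (v : n.-tuple R) :
  cube_indic a b v = [forall i, a <= tnth v i <= b]%:R.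
Proof.
rewrite /cube_indic; case: (boolP [forall i, _]) => [/forallP inv | /forallPn [i Ni]].
  by apply: big1 => i _; rewrite indicE mem_set //= in_itv /= inv.
by rewrite (bigD1 i) //= indicE memNset ?mul0r //= in_itv /= (negbTE Ni).
Qed.

Lemma cube_indic_ge0 n a b (v : n.-tuple R) : 0 <= cube_indic a b v.
Proof. by rewrite cube_indicE ler0n. Qed.

Lemma measurable_cube_indic n a b : measurable_fun setT (@cube_indic n a b).
Proof.
rewrite /cube_indic; elim: (index_enum _) => [|i r IH].
  by under eq_fun do rewrite big_nil; exact: measurable_cst.
under eq_fun do rewrite big_cons.
apply: measurable_realfun.measurable_funM => //.
apply: measurableT_comp; last exact: measurable_tnth.
exact: measurable_realfun.measurable_indic.
Qed.

Lemma iint_cube_indic n {c a b : R} : 0 <= c -> a <= b ->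
  iint (fun v => (c * @cube_indic n a b v)%:E) = (c * (b - a) ^+ n)%:E.
Proof.
elim: n c => [|k IH] c c0 ab /=; first by rewrite /cube_indic big_ord0 expr0.
have slice x : iint (fun v : k.-tuple R => (c * cube_indic a b (cons_tuple x v))%:E)
    = ((c * (b - a) ^+ k) * \1_(`[a, b]%classic) x)%:E.
  rewrite -mulrA [_ * \1__ _]mulrC mulrA -IH ?mulr_ge0 ?indicE ?ler0n //.
  congr iint; apply: funext => v; rewrite /cube_indic big_ord_recl /=.
  by congr (_%:E); rewrite mulrA; congr (_ * _); apply: eq_bigr => i _; rewrite tnthS.
under eq_fun do rewrite slice.
have /= -> // := integralZl_indic (m := @lebesgue_measure R) measurableT
  (fun=> `[a, b]%classic) (c * (b - a) ^+ k); last first.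
  by rewrite ltNge mulr_ge0 // exprn_ge0 // subr_ge0.
rewrite integral_indic // setIT.
have /= -> := lebesgue_measure_itv `[a, b]; rewrite lte_fin.
case: ltP => [_|ba]; first by rewrite -EFinM exprSr mulrA.
have -> : b = a by apply/eqP; rewrite eq_le ab ba.
by rewrite subrr expr0n /= mule0 expr0n /= mulr0.
Qed.

End cube_indicator.

Section phase_bounds.
Context {R : realType}.

Lemma cos1_le_cos (y : R) : 0 <= y <= 1 -> cos 1 <= cos y.
Proof.
move=> /andP[y0 y1]; have [->|y_neq1] := eqVneq y 1; first by [].
have pi_ge1 : (1 : R) <= pi by apply: le_trans (pi_ge2 R); rewrite ler1n.
apply/ltW; rewrite ltr_cos ?in_itv /= ?y0 ?(le_trans y1) ?ler01 //.
by rewrite lt_neqAle y_neq1 y1.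
Qed.

Lemma sqnorm_ge0 {n} (v : n.-tuple R) : 0 <= sqnorm v.
Proof. by apply: sumr_ge0 => i _; rewrite sqr_ge0. Qed.

Lemma sqnorm_le {n} {b : R} {v : n.-tuple R} :
  (forall i, 0 <= tnth v i <= b) -> sqnorm v <= n%:R * b ^+ 2.
Proof.
move=> vb; rewrite /sqnorm mulr_natl -[X in _ *+ X](card_ord n) -sumr_const.
by apply: ler_sum => i _; have /andP[? ?] := vb i; rewrite !expr2 ler_pM.
Qed.

Lemma dotp_ge0_le {n} {a b : R} {x v : n.-tuple R} :
  (forall i, 0 <= tnth x i <= a) -> (forall i, 0 <= tnth v i <= b) ->
  0 <= dotp x v <= n%:R * (a * b).
Proof.
move=> xa vb; rewrite /dotp; apply/andP; split.
  by apply: sumr_ge0 => i _; have /andP[? _] := xa i; have /andP[? _] := vb i;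
    exact: mulr_ge0.
rewrite mulr_natl -[X in _ *+ X](card_ord n) -sumr_const.
by apply: ler_sum => i _; have /andP[? ?] := xa i; have /andP[? ?] := vb i;
  exact: ler_pM.
Qed.

Lemma schro_re_le_abs {n} (gr gi : n.-tuple R -> R) t x :
  fine (schro_re gr gi t x) <= schro_abs gr gi t x.
Proof.
apply: le_trans (ler_norm _) _; rewrite -sqrtr_sqr ler_sqrt ?addr_ge0 ?sqr_ge0 //.
by rewrite lerDl sqr_ge0.
Qed.

End phase_bounds.

Section knapp_example.
Context {R : realType} {n : nat} (n_gt0 : (0 < n)%N) {L : R} (L_ge1 : 1 <= L).

Local Notation fhat := (@cube_indic R n 0 L).
Let delta := (2 * n%:R * L)^-1.
Let tau := (2 * n%:R * L ^+ 2)^-1.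

Let L_gt0 : 0 < L. Proof. exact: lt_le_trans L_ge1. Qed.
Let n_ge1 : (1 : R) <= n%:R. Proof. by rewrite ler1n. Qed.
Let n_pos : (0 : R) < n%:R. Proof. by rewrite ltr0n. Qed.
Let nL2_ge1 : 1 <= n%:R * L ^+ 2.
Proof. by rewrite mulr_ege1 // expr_ge1 // ltW. Qed.
Let two_n_gt0 : 0 < 2 * n%:R :> R. Proof. by rewrite mulr_gt0 ?ltr0n. Qed.
Let delta_gt0 : 0 < delta. Proof. by rewrite invr_gt0 mulr_gt0. Qed.
Let tau_gt0 : 0 < tau.
Proof. by rewrite invr_gt0 !mulr_gt0 ?exprn_gt0 // ltr0n. Qed.
Let tau_lt1 : tau < 1.
Proof.
rewrite invf_lt1 ?mulr_gt0 ?exprn_gt0 ?ltr0n // -mulrA.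
by apply: lt_le_trans (ler_wpM2l _ nL2_ge1); rewrite ?mulr1 ?ltr1n ?ler0n.
Qed.

Lemma phase_in01 (x xi : n.-tuple R) :
  (forall i, 0 <= tnth x i <= delta) -> (forall i, 0 <= tnth xi i <= L) ->
  0 <= dotp x xi + tau * sqnorm xi <= 1.
Proof.
move=> x_small xi_cube.
have /andP[dot_ge0 dot_le] := dotp_ge0_le x_small xi_cube.
have sq_le := sqnorm_le xi_cube.
apply/andP; split; first by rewrite addr_ge0 // mulr_ge0 ?sqnorm_ge0 // ltW.
have -> : 1 = n%:R * (delta * L) + tau * (n%:R * L ^+ 2) :> R.
  by rewrite /delta /tau; field; rewrite ?pnatr_eq0 -?lt0n // gt_eqF.
by rewrite lerD // ler_pM2l.
Qed.

Lemma small_cube_sub_unit_ball {x : n.-tuple R} :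
  (forall i, 0 <= tnth x i <= delta) -> unit_ball x.
Proof.
move=> x_small; rewrite /unit_ball /=; apply: le_lt_trans (sqnorm_le x_small) _.
have -> : n%:R * delta ^+ 2 = (4 * (n%:R * L ^+ 2))^-1.
  by rewrite /delta; field; rewrite ?pnatr_eq0 -?lt0n // gt_eqF.
rewrite invf_lt1 ?mulr_gt0 ?exprn_gt0 ?ltr0n //.
by apply: lt_le_trans (ler_wpM2l _ nL2_ge1); rewrite ?mulr1 ?ltr1n ?ler0n.
Qed.

Lemma schro_re_cube_bounds {x : n.-tuple R} :
  (forall i, 0 <= tnth x i <= delta) ->
  ((cos 1 * L ^+ n)%:E <= schro_re fhat (fun=> 0%R) tau x <= (L ^+ n)%:E)%E.
Proof.
move=> x_small; set phase := fun xi => dotp x xi + tau * sqnorm xi.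
have integrand xi : cos 1 * fhat xi <= cos (phase xi) * fhat xi - sin (phase xi) * 0
                    <= 1 * fhat xi.
  rewrite mulr0 subr0 cube_indicE; case: forallP => [/= xi_cube|_] /=.
    by rewrite !mulr1 cos1_le_cos ?cos_le1 ?phase_in01.
  by rewrite !mulr0 lexx.
have lower_ge0 xi : 0 <= cos 1 * fhat xi by rewrite mulr_ge0 ?cube_indic_ge0 ?ltW ?cos1_gt0.
have := iint_cube_indic n (ltW (cos1_gt0 R)) (ltW L_gt0).
have := iint_cube_indic n ler01 (ltW L_gt0).
rewrite subr0 mul1r => <- <-.
apply/andP; split; apply: le_iint => xi; have /andP[lb ub] := integrand xi;
  rewrite lee_fin.
- exact: lower_ge0.
- exact: lb.
- exact: le_trans (lower_ge0 xi) lb.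
- exact: ub.
Qed.

Lemma schro_max_cube_ge {x : n.-tuple R} :
  (forall i, 0 <= tnth x i <= delta) ->
  ((cos 1 * L ^+ n)%:E <= schro_max fhat (fun=> 0%R) x)%E.
Proof.
move=> /schro_re_cube_bounds /andP[].
have := schro_re_le_abs fhat (fun=> 0%R) tau x.
case: (schro_re _ _ _ _) => [r||] //= r_le_abs lb _.
apply: le_trans (_ : (schro_abs fhat (fun=> 0%R) tau x)%:E <= _)%E.
  by rewrite lee_fin (le_trans _ r_le_abs).
by apply: ereal_sup_ubound; exists tau; rewrite //= in_itv /= tau_gt0 tau_lt1.
Qed.

Lemma maxfun_Lp_ball_cube_ge (p : R) : 0 < p ->
  ((cos 1 * (2 * n%:R) `^ (- (n%:R / p)) * L `^ (n%:R - n%:R / p))%:E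
    <= maxfun_Lp_ball p fhat (fun=> 0%R))%E.
Proof.
move=> p_gt0; have cos1_pos := cos1_gt0 R.
have cLn_gt0 : 0 < cos 1 * L ^+ n by rewrite mulr_gt0 ?exprn_gt0.
have -> : cos 1 * (2 * n%:R) `^ (- (n%:R / p)) * L `^ (n%:R - n%:R / p)
    = ((cos 1 * L ^+ n) `^ p * delta ^+ n) `^ p^-1.
  have lower_gt0 : 0 < (cos 1 * L ^+ n) `^ p * delta ^+ n.
    by rewrite mulr_gt0 ?powR_gt0 ?exprn_gt0.
  apply: ln_inj; [by rewrite posrE !mulr_gt0 ?powR_gt0 | by rewrite posrE powR_gt0 |].
  rewrite !lnM ?posrE ?mulr_gt0 ?powR_gt0 ?exprn_gt0 //.
  rewrite !ln_powR !lnM ?posrE ?powR_gt0 ?exprn_gt0 //.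
  rewrite ln_powR lnM ?posrE ?exprn_gt0 // !lnXn //.
  rewrite /delta lnV ?posrE ?mulr_gt0 // !lnM ?posrE //.
  by field; rewrite gt_eqF.
rewrite /maxfun_Lp_ball -poweR_EFin; apply: gt0_ler_poweR.
- by rewrite invr_ge0 ltW.
- by rewrite in_itv /= leey andbT lee_fin mulr_ge0 ?powR_ge0 ?exprn_ge0 ?ltW.
- rewrite in_itv /= leey andbT; apply: iint_ge0 => v.
  by case: ifP => // _; exact: poweR_ge0.
have := iint_cube_indic n (powR_ge0 (cos 1 * L ^+ n) p) (ltW delta_gt0).
rewrite subr0 => <-; apply: le_iint => v.
  by rewrite lee_fin mulr_ge0 ?powR_ge0 ?cube_indic_ge0.
rewrite cube_indicE; case: forallP => [/= v_small|_] /=; last first.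
  by rewrite mulr0; case: ifP => // _; exact: poweR_ge0.
rewrite (asboolT (small_cube_sub_unit_ball v_small)) mulr1 -poweR_EFin.
have schro_max_ge := schro_max_cube_ge v_small.
apply: gt0_ler_poweR; rewrite ?in_itv /= ?leey ?andbT ?(ltW p_gt0) //.
- by rewrite lee_fin (ltW cLn_gt0).
- by rewrite (le_trans _ schro_max_ge) // lee_fin (ltW cLn_gt0).
Qed.

Lemma cabs_cube_indic : cabs fhat (fun=> 0%R) = fhat.
Proof.
by apply: funext => xi; rewrite /cabs expr0n /= addr0 sqrtr_sqr ger0_norm ?cube_indic_ge0.
Qed.

Lemma iint_cabs_cube_indic : iint (fun xi => (cabs fhat (fun=> 0%R) xi)%:E) = (L ^+ n)%:E.
Proof.
have := iint_cube_indic n ler01 (ltW L_gt0); rewrite subr0 mul1r => <-.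
by rewrite cabs_cube_indic; congr iint; apply: funext => xi; rewrite mul1r.
Qed.

Lemma Hs_norm_cube_le (s : R) : 0 <= s ->
  (Hs_norm s fhat (fun=> 0%R) <= ((2 * n%:R) `^ (s / 2) * L `^ (s + n%:R / 2))%:E)%E.
Proof.
move=> s_ge0; set c := (2 * n%:R * L ^+ 2) `^ s.
have c_gt0 : 0 < c by rewrite powR_gt0 // mulr_gt0 ?exprn_gt0.
have -> : (2 * n%:R) `^ (s / 2) * L `^ (s + n%:R / 2) = (c * L ^+ n) `^ 2^-1.
  apply: ln_inj; rewrite ?posrE;
    [by rewrite mulr_gt0 ?powR_gt0 | by rewrite powR_gt0 ?mulr_gt0 ?exprn_gt0 |].
  rewrite lnM ?posrE ?powR_gt0 // !ln_powR !lnM ?posrE ?exprn_gt0 //.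
  rewrite /c ln_powR !lnM ?posrE ?mulr_gt0 ?exprn_gt0 // !lnXn //.
  by field.
rewrite /Hs_norm cabs_cube_indic -poweR_EFin; apply: gt0_ler_poweR.
- by rewrite invr_ge0.
- rewrite in_itv /= leey andbT; apply: iint_ge0 => xi.
  by rewrite lee_fin mulr_ge0 ?powR_ge0 ?sqr_ge0.
- by rewrite in_itv /= leey andbT lee_fin mulr_ge0 ?exprn_ge0 ?ltW.
have := iint_cube_indic n (ltW c_gt0) (ltW L_gt0).
rewrite subr0 => <-; apply: le_iint => xi.
  by rewrite lee_fin mulr_ge0 ?powR_ge0 ?sqr_ge0.
rewrite lee_fin cube_indicE; case: forallP => [/= xi_cube|_] /=; last first.
  by rewrite expr0n /= !mulr0.
rewrite expr1n !mulr1 ge0_ler_powR // ?nnegrE ?addr_ge0 ?sqnorm_ge0 ?mulr_ge0 ?exprn_ge0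
  ?(ltW L_gt0) //.
by rewrite -mulrA mulr_natl mulr2n lerD // sqnorm_le.
Qed.

End knapp_example.

Lemma powR_exponent_le {R : realType} {a b c1 c2 : R} : 0 < c1 ->
  (forall L, 1 <= L -> c1 * L `^ a <= c2 * L `^ b) -> a <= b.
Proof.
move=> c1_gt0 growth; rewrite leNgt; apply/negP => ba.
have c2_ge_c1 : c1 <= c2 by have := growth 1 (lexx 1); rewrite powR1 !mulr1.
set y := c2 / (c1 * (a - b)).
have y_ge0 : 0 <= y.
  by rewrite divr_ge0 ?mulr_ge0 ?subr_ge0 ?ltW // (lt_le_trans c1_gt0).
have expRy_ge1 : 1 <= expR y by apply: le_trans (expR_ge1Dx y); lra.
have := growth _ expRy_ge1; rewrite -!expRM.
have -> : y * a = y * (a - b) + y * b by ring.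
rewrite expRD mulrA ler_pM2r ?expR_gt0 //.
have y_ab : y * (a - b) = c2 / c1.
  by rewrite /y; field; rewrite ?gt_eqF ?subr_gt0.
have := ler_wpM2l (ltW c1_gt0) (expR_ge1Dx (y * (a - b))).
rewrite y_ab (_ : c1 * (1 + c2 / c1) = c1 + c2); last by field; rewrite gt_eqF.
lra.
Qed.

Lemma maximal_estimate_exponents {R : realType} {n : nat} (p s C : R) :
  (0 < n)%N -> 0 < p -> 0 <= s ->
  (forall gr gi : n.-tuple R -> R,
     measurable_fun setT gr -> measurable_fun setT gi ->
     (iint (fun xi => (cabs gr gi xi)%:E) < +oo)%E ->
     (Hs_norm s gr gi < +oo)%E ->
     (maxfun_Lp_ball p gr gi <= C%:E * Hs_norm s gr gi)%E) ->
  n%:R / 2 - n%:R / p <= s.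
Proof.
move=> n_gt0 p_gt0 s_ge0 estimate; suff : n%:R - n%:R / p <= s + n%:R / 2 by lra.
have c1_gt0 : 0 < cos 1 * (2 * n%:R) `^ (- (n%:R / p)) :> R.
  by rewrite mulr_gt0 ?cos1_gt0 // powR_gt0 // mulr_gt0 ?ltr0n.
apply: (powR_exponent_le (c2 := `|C| * (2 * n%:R) `^ (s / 2)) c1_gt0) => L L_ge1.
have Hs_le := Hs_norm_cube_le n_gt0 L_ge1 s s_ge0.
have Hs_ge0 : (0 <= Hs_norm s (@cube_indic R n 0 L) (fun=> 0%R))%E.
  exact: poweR_ge0.
have := estimate (cube_indic 0 L) (fun=> 0%R) (measurable_cube_indic _ _ _)
  (measurable_cst _).
rewrite (iint_cabs_cube_indic L_ge1) => /(_ (ltry _) (le_lt_trans Hs_le (ltry _))) max_le.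
rewrite -lee_fin -[`|C| * _ * _]mulrA EFinM.
apply: le_trans (maxfun_Lp_ball_cube_ge n_gt0 L_ge1 p p_gt0) (le_trans max_le _).
have C_le : (C%:E <= `|C|%:E)%E by rewrite lee_fin ler_norm.
by apply: le_trans (lee_wpmul2r Hs_ge0 C_le) (lee_wpmul2l _ Hs_le); rewrite lee_fin.
Qed.

Lemma le_critical_exponent {R : realType} (n : nat) (p : R) : (0 < n)%N -> 0 < p ->
  (forall s, n%:R / (2 * n.+1%:R) < s -> n%:R / 2 - n%:R / p <= s) ->
  p <= 2 * n.+1%:R / n%:R.
Proof.
move=> n_gt0 p_gt0 exponent_le.
have gap_le : n%:R / 2 - n%:R / p <= n%:R / (2 * n.+1%:R) :> R.
  by apply/ler_addgt0Pr => e e_gt0; apply: exponent_le; rewrite ltrDl.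
rewrite ler_pdivlMr ?ltr0n // -subr_ge0.
have -> : 2 * n.+1%:R - p * n%:R
    = (n%:R / (2 * n.+1%:R) - (n%:R / 2 - n%:R / p)) * (2 * p * n.+1%:R) / n%:R.
  by field; rewrite ?gt_eqF ?ltr0n.
by rewrite divr_ge0 ?ler0n // mulr_ge0 ?subr_ge0 // !mulr_ge0 ?ler0n ?ltW.
Qed.

Theorem theorem1p5 (R : realType) (n : nat) (hn : (1 <= n)%N) (p : R) :
  1 < p ->
  (forall s : R, n%:R / (2 * n.+1%:R) < s ->
     exists C : R, forall gr gi : n.-tuple R -> R,
       measurable_fun setT gr -> measurable_fun setT gi ->
       (iint (fun xi => (cabs gr gi xi)%:E) < +oo)%E ->
       (Hs_norm s gr gi < +oo)%E ->
       (maxfun_Lp_ball p gr gi <= C%:E * Hs_norm s gr gi)%E) ->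
  p <= 2 * n.+1%:R / n%:R.
Proof.
move=> p_gt1 maximal_estimate; have p_gt0 : 0 < p by exact: lt_trans p_gt1.
apply: le_critical_exponent => // s s_gt.
have s_ge0 : 0 <= s by apply: le_trans (ltW s_gt); rewrite divr_ge0 ?mulr_ge0.
have [C estimate] := maximal_estimate s s_gt.
exact: maximal_estimate_exponents estimate.
Qed.
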